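(* Let $(X,T)$ be a dynamical system and let $K\subset\mathrm{Per}(T)$ be linkable. Then $\overline{\mathcal M_T^{co}(K)}$ equals the closed convex hull of $\mathcal M_T^{co}(K)$ in $\mathcal M(X)$ (closures in the weak$*$ topology).
   Context: A dynamical system $(X,T)$ consists of a complete separable metric space $(X,\rho)$ and a continuous surjection $T\colon X\to X$; $\mathcal M(X)$ is the space of Borel probability measures with the weak$*$ topology. For $x\in\mathrm{Per}(T)$ of minimal period $k$, $\gamma(x)=\frac1k\sum_{j=0}^{k-1}\delta_{T^jx}$; $\mathcal M_T^{co}(K)=\{\gamma(x):x\in K\}$. $B(x,n,\varepsilon)=\{y:\rho(T^jy,T^jx)<\varepsilon,\ 0\le j<n\}$. $K\subset\mathrm{Per}(T)$ is linkable if for all $y_1,y_2\in K$, $\varepsilon>0$, $\lambda\in[0,1]$ there exist $p_1,p_2,q_1,q_2\in\mathbb N$ and $z\in K$ with: $T^{q_2}z=z$; $\lambda-\varepsilon\le\frac{p_1}{p_1+p_2}\le\lambda+\varepsilon$; $p_1\le q_1\le(1+\varepsilon)p_1$ and $z\in B(y_1,p_1,\varepsilon)$; $p_2\le q_2-q_1\le(1+\varepsilon)p_2$ and $T^{q_1}z\in B(y_2,p_2,\varepsilon)$. *)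

From Stdlib Require Import Reals Lra List ClassicalEpsilon.
Open Scope R_scope.

Section Defs.
Context {X : Type}.

Definition is_metric (rho : X -> X -> R) : Prop :=
  (forall x y, 0 <= rho x y) /\
  (forall x y, rho x y = 0 <-> x = y) /\
  (forall x y, rho x y = rho y x) /\
  (forall x y z, rho x z <= rho x y + rho y z).

Definition cauchy_seq (rho : X -> X -> R) (u : nat -> X) : Prop :=
  forall eps, 0 < eps -> exists N, forall m n, (N <= m)%nat -> (N <= n)%nat ->
    rho (u m) (u n) < eps.

Definition converges_to (rho : X -> X -> R) (u : nat -> X) (x : X) : Prop :=
  forall eps, 0 < eps -> exists N, forall n, (N <= n)%nat -> rho (u n) x < eps.

Definition complete_metric (rho : X -> X -> R) : Prop :=
  forall u, cauchy_seq rho u -> exists x, converges_to rho u x.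

(* separable: there is a countable dense subset (vacuous if X is empty) *)
Definition separable_metric (rho : X -> X -> R) : Prop :=
  forall x0 : X, exists d : nat -> X,
    forall x eps, 0 < eps -> exists n, rho x (d n) < eps.

Definition continuous_map (rho : X -> X -> R) (T : X -> X) : Prop :=
  forall x eps, 0 < eps -> exists delta, 0 < delta /\
    forall y, rho x y < delta -> rho (T x) (T y) < eps.

Definition surjective_map (T : X -> X) : Prop := forall y, exists x, T x = y.

Definition dynamical_system (rho : X -> X -> R) (T : X -> X) : Prop :=
  is_metric rho /\ complete_metric rho /\ separable_metric rho /\
  continuous_map rho T /\ surjective_map T.

Definition open_set (rho : X -> X -> R) (U : X -> Prop) : Prop :=
  forall x, U x -> exists r, 0 < r /\ forall y, rho x y < r -> U y.

Definition sigma_algebra (F : (X -> Prop) -> Prop) : Prop :=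
  F (fun _ => True) /\
  (forall A, F A -> F (fun x => ~ A x)) /\
  (forall A : nat -> X -> Prop, (forall n, F (A n)) -> F (fun x => exists n, A n x)).

Definition borel (rho : X -> X -> R) (A : X -> Prop) : Prop :=
  forall F, sigma_algebra F -> (forall U, open_set rho U -> F U) -> F A.

(* A Borel probability measure, represented as a set function whose values
   on non-Borel sets are irrelevant. *)
Definition prob_measure (rho : X -> X -> R) (m : (X -> Prop) -> R) : Prop :=
  m (fun _ => True) = 1 /\
  (forall A, borel rho A -> 0 <= m A) /\
  (forall A : nat -> X -> Prop,
     (forall n, borel rho (A n)) ->
     (forall i j x, i <> j -> A i x -> A j x -> False) ->
     Un_cv (fun n => sum_f_R0 (fun i => m (A i)) n) (m (fun x => exists n, A n x))).

Fixpoint sumR (n : nat) (g : nat -> R) : R :=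
  match n with O => 0 | S k => sumR k g + g k end.

(* Lebesgue integral of a bounded (measurable) f: the limit of the sums
   sum_i t_(i+1) m(t_i < f <= t_(i+1)) over grids of the range with mesh -> 0. *)
Definition integral_is (m : (X -> Prop) -> R) (f : X -> R) (I : R) : Prop :=
  forall eps, 0 < eps -> exists delta, 0 < delta /\
    forall (n : nat) (t : nat -> R),
      (forall x, t O < f x) -> (forall x, f x <= t n) ->
      (forall i, (i < n)%nat -> t i < t (S i) < t i + delta) ->
      Rabs (sumR n (fun i => t (S i) * m (fun x => t i < f x <= t (S i))) - I) < eps.

Definition bounded_continuous (rho : X -> X -> R) (f : X -> R) : Prop :=
  (exists M, forall x, Rabs (f x) <= M) /\
  (forall x eps, 0 < eps -> exists delta, 0 < delta /\
     forall y, rho x y < delta -> Rabs (f x - f y) < eps).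

(* weak* closure in M(X) of a set S of measures: mu is in M(X) and every basic
   weak* neighbourhood of mu (finitely many bounded continuous test functions,
   radius eps) meets S. *)
Definition weak_closure (rho : X -> X -> R) (S : ((X -> Prop) -> R) -> Prop)
    (mu : (X -> Prop) -> R) : Prop :=
  prob_measure rho mu /\
  forall (fs : list (X -> R)) (eps : R),
    Forall (bounded_continuous rho) fs -> 0 < eps ->
    exists nu, S nu /\
      Forall (fun f => exists a b, integral_is mu f a /\ integral_is nu f b /\
                                   Rabs (a - b) < eps) fs.

Definition convex_hull (S : ((X -> Prop) -> R) -> Prop) (m : (X -> Prop) -> R) : Prop :=
  exists (n : nat) (lam : nat -> R) (ms : nat -> (X -> Prop) -> R),
    (forall i, (i < n)%nat -> 0 <= lam i /\ S (ms i)) /\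
    sumR n lam = 1 /\
    forall A, m A = sumR n (fun i => lam i * ms i A).

Definition periodic (T : X -> X) (x : X) : Prop :=
  exists n, (0 < n)%nat /\ Nat.iter n T x = x.

Definition minimal_period (T : X -> X) (x : X) (k : nat) : Prop :=
  (0 < k)%nat /\ Nat.iter k T x = x /\
  forall j, (0 < j)%nat -> (j < k)%nat -> Nat.iter j T x <> x.

Definition indic (P : Prop) : R :=
  if excluded_middle_informative P then 1 else 0.

Definition orbit_measure (T : X -> X) (x : X) (k : nat) : (X -> Prop) -> R :=
  fun A => / INR k * sumR k (fun j => indic (A (Nat.iter j T x))).

Definition Mco (T : X -> X) (K : X -> Prop) (m : (X -> Prop) -> R) : Prop :=
  exists x k, K x /\ minimal_period T x k /\ m = orbit_measure T x k.

Definition bowen_ball (rho : X -> X -> R) (T : X -> X) (x : X) (n : nat) (eps : R)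
    (y : X) : Prop :=
  forall j, (j < n)%nat -> rho (Nat.iter j T y) (Nat.iter j T x) < eps.

Definition linkable (rho : X -> X -> R) (T : X -> X) (K : X -> Prop) : Prop :=
  (forall x, K x -> periodic T x) /\
  forall y1 y2 eps lam, K y1 -> K y2 -> 0 < eps -> 0 <= lam <= 1 ->
    exists (p1 p2 q1 q2 : nat) (z : X),
      (0 < p1)%nat /\ (0 < p2)%nat /\ (0 < q1)%nat /\ (0 < q2)%nat /\
      K z /\ Nat.iter q2 T z = z /\
      lam - eps <= INR p1 / (INR p1 + INR p2) <= lam + eps /\
      INR p1 <= INR q1 <= (1 + eps) * INR p1 /\
      bowen_ball rho T y1 p1 eps z /\
      INR p2 <= INR q2 - INR q1 <= (1 + eps) * INR p2 /\
      bowen_ball rho T y2 p2 eps (Nat.iter q1 T z).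

End Defs.

(* The closure of M_T^co(K) lies in that of its convex hull trivially.  Conversely it suffices to
   approximate a finite convex combination of periodic orbit measures by a single one, and, by
   induction on the number of terms, a combination lam gamma(y1) + (1 - lam) gamma(y2).
   Linkability gives z in K whose orbit shadows y1 for p1 steps and then y2 for p2 steps, with
   p1 / (p1 + p2) close to lam and short transition times.  Integrating against an orbit measure is
   averaging along the orbit, so the average of a bounded continuous f along the orbit of z is
   close to lam * int f dgamma(y1) + (1 - lam) * int f dgamma(y2) as soon as p1 + p2 is large
   compared with the periods of y1 and y2.  Linkability gives no lower bound on p1 + p2; it is
   obtained by linking at two targets closer than any two distinct fractions with small
   denominators. *)

From Stdlib Require Import Reals Lra Lia List ClassicalEpsilon.
Open Scope R_scope.

Lemma Rabs_le_iff x a : Rabs x <= a <-> - a <= x <= a.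
Proof. unfold Rabs; destruct (Rcase_abs x); split; intros; lra. Qed.

Lemma sumR_ext n g h : (forall i, (i < n)%nat -> g i = h i) -> sumR n g = sumR n h.
Proof.
  induction n as [|n IH]; intros H; simpl; [reflexivity|].
  rewrite IH, H; [reflexivity|lia|intros; apply H; lia].
Qed.

Lemma sumR_plus n g h : sumR n (fun i => g i + h i) = sumR n g + sumR n h.
Proof. induction n; simpl; lra. Qed.

Lemma sumR_minus n g h : sumR n (fun i => g i - h i) = sumR n g - sumR n h.
Proof. induction n; simpl; lra. Qed.

Lemma sumR_scal n c g : sumR n (fun i => c * g i) = c * sumR n g.
Proof. induction n; simpl; lra. Qed.

Lemma sumR_const n c : sumR n (fun _ => c) = INR n * c.
Proof. induction n; simpl sumR; [simpl; lra|]. rewrite S_INR. lra. Qed.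

Lemma sumR_swap n m (g : nat -> nat -> R) :
  sumR n (fun i => sumR m (g i)) = sumR m (fun j => sumR n (fun i => g i j)).
Proof.
  induction n as [|n IH]; simpl.
  - rewrite sumR_const. lra.
  - rewrite IH, <- sumR_plus. reflexivity.
Qed.

Lemma sumR_le n g h : (forall i, (i < n)%nat -> g i <= h i) -> sumR n g <= sumR n h.
Proof.
  induction n as [|n IH]; intros H; simpl; [lra|].
  apply Rplus_le_compat; [apply IH; intros; apply H|apply H]; lia.
Qed.

Lemma sumR_nonneg n g : (forall i, (i < n)%nat -> 0 <= g i) -> 0 <= sumR n g.
Proof. intros H. rewrite <- (Rmult_0_r (INR n)), <- sumR_const. apply sumR_le, H. Qed.

Lemma sumR_abs n g : Rabs (sumR n g) <= sumR n (fun i => Rabs (g i)).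
Proof.
  induction n; simpl; [rewrite Rabs_R0; lra|].
  eapply Rle_trans; [apply Rabs_triang|]. lra.
Qed.

Lemma sumR_bound n g c : (forall i, (i < n)%nat -> Rabs (g i) <= c) -> Rabs (sumR n g) <= INR n * c.
Proof. intros H. rewrite <- sumR_const. eapply Rle_trans; [apply sumR_abs|]. apply sumR_le, H. Qed.

Lemma sumR_add a b g : sumR (a + b) g = sumR a g + sumR b (fun j => g (a + j)%nat).
Proof.
  induction b as [|b IH]; simpl; [rewrite Nat.add_0_r; lra|].
  rewrite Nat.add_succ_r. simpl. lra.
Qed.

Lemma sumR_nonneg_eq0 n g : (forall i, (i < n)%nat -> 0 <= g i) -> sumR n g = 0 ->
  forall i, (i < n)%nat -> g i = 0.
Proof.
  induction n as [|n IH]; intros H Hs i Hi; [lia|]. simpl in Hs.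
  assert (0 <= sumR n g) by (apply sumR_nonneg; intros; apply H; lia).
  assert (0 <= g n) by (apply H; lia).
  destruct (Nat.eq_dec i n) as [->|]; [lra|]. apply IH; [intros; apply H; lia|lra|lia].
Qed.

Definition mean (n : nat) (g : nat -> R) : R := / INR n * sumR n g.

Lemma mean_minus n g h : mean n g - mean n h = mean n (fun j => g j - h j).
Proof. unfold mean. rewrite sumR_minus. ring. Qed.

Lemma mean_bound n g B : (0 < n)%nat -> (forall j, (j < n)%nat -> Rabs (g j) <= B) ->
  Rabs (mean n g) <= B.
Proof.
  intros Hn HB. assert (Hnr : 0 < INR n) by (apply lt_0_INR; exact Hn).
  unfold mean. rewrite Rabs_mult, Rabs_inv, Rabs_right by lra.
  apply (Rmult_le_reg_l (INR n)); [exact Hnr|].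
  rewrite <- Rmult_assoc, Rinv_r, Rmult_1_l by lra. apply sumR_bound, HB.
Qed.

Section Periodic_sequences.
Variables (g : nat -> R) (k : nat).
Hypothesis g_periodic : forall j, g (k + j)%nat = g j.

Lemma periodic_mul a j : g (a * k + j)%nat = g j.
Proof.
  induction a as [|a IH]; simpl; [reflexivity|].
  rewrite <- Nat.add_assoc, g_periodic. exact IH.
Qed.

Lemma sumR_periodic a : sumR (a * k) g = INR a * sumR k g.
Proof.
  induction a as [|a IH]; [simpl; lra|].
  replace (S a * k)%nat with (a * k + k)%nat by lia.
  rewrite sumR_add, IH, S_INR, (sumR_ext k (fun j => g (a * k + j)%nat) g)
    by (intros; apply periodic_mul).
  lra.
Qed.

(* A window of length p consists of whole periods, each contributing k times the mean exactly,
   and a remainder shorter than k. *)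
Lemma sumR_periodic_deviation p B : (0 < k)%nat -> (forall j, Rabs (g j) <= B) ->
  Rabs (sumR p g - INR p * mean k g) <= 2 * B * INR k.
Proof.
  intros Hk HB.
  assert (Hkr : 0 < INR k) by (apply lt_0_INR; exact Hk).
  assert (B0 : 0 <= B) by (pose proof (HB O); pose proof (Rabs_pos (g O)); lra).
  set (a := (p / k)%nat). set (r := (p mod k)%nat).
  assert (Hp : p = (a * k + r)%nat) by (unfold a, r; rewrite (Nat.div_mod_eq p k) at 1; lia).
  assert (Hr : INR r <= INR k) by (apply le_INR, Nat.lt_le_incl, Nat.mod_upper_bound; lia).
  assert (Hrem : sumR r (fun j => g (a * k + j)%nat) = sumR r g)
    by (apply sumR_ext; intros; apply periodic_mul).
  rewrite Hp, sumR_add, sumR_periodic, Hrem, plus_INR, mult_INR.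
  replace (INR a * sumR k g + sumR r g - (INR a * INR k + INR r) * mean k g)
    with (sumR r g - INR r * mean k g) by (unfold mean; field; lra).
  pose proof (sumR_bound r g B (fun j _ => HB j)).
  pose proof (mean_bound k g B Hk (fun j _ => HB j)).
  unfold Rminus. eapply Rle_trans; [apply Rabs_triang|].
  rewrite Rabs_Ropp, Rabs_mult, (Rabs_right (INR r)) by (apply Rle_ge, pos_INR).
  assert (INR r * Rabs (mean k g) <= INR k * B) by (apply Rmult_le_compat; auto using pos_INR, Rabs_pos).
  nra.
Qed.

Lemma sumR_tracking_deviation (h : nat -> R) p c B eta :
  (0 < k)%nat -> (forall j, Rabs (g j) <= B) ->
  (forall j, (j < p)%nat -> Rabs (h (c + j)%nat - g j) <= eta) ->
  Rabs (sumR p (fun j => h (c + j)%nat) - INR p * mean k g) <= INR p * eta + 2 * B * INR k.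
Proof.
  intros Hk HB Htrack.
  pose proof (sumR_periodic_deviation p B Hk HB) as Hper.
  assert (Hclose : Rabs (sumR p (fun j => h (c + j)%nat) - sumR p g) <= INR p * eta)
    by (rewrite <- sumR_minus; apply sumR_bound, Htrack).
  apply Rabs_le_iff in Hper, Hclose. apply Rabs_le_iff. lra.
Qed.

End Periodic_sequences.

Section Concatenation.
Variables (h g1 g2 : nat -> R) (k1 k2 : nat) (B : R).
Hypotheses (k1_pos : (0 < k1)%nat) (k2_pos : (0 < k2)%nat).
Hypotheses (g1_periodic : forall j, g1 (k1 + j)%nat = g1 j)
           (g2_periodic : forall j, g2 (k2 + j)%nat = g2 j).
Hypotheses (h_bound : forall j, Rabs (h j) <= B) (g1_bound : forall j, Rabs (g1 j) <= B)
           (g2_bound : forall j, Rabs (g2 j) <= B).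

Lemma sumR_concat_deviation p1 p2 q1 Q e eta :
  (p1 <= q1)%nat -> (q1 + p2 <= Q)%nat ->
  INR q1 - INR p1 <= e * INR p1 -> INR Q - INR q1 - INR p2 <= e * INR p2 ->
  (forall j, (j < p1)%nat -> Rabs (h j - g1 j) <= eta) ->
  (forall j, (j < p2)%nat -> Rabs (h (q1 + j)%nat - g2 j) <= eta) ->
  Rabs (sumR Q h - (INR p1 * mean k1 g1 + INR p2 * mean k2 g2))
    <= (INR p1 + INR p2) * (eta + B * e) + 2 * B * (INR k1 + INR k2).
Proof.
  intros Hpq HqQ Hgap1 Hgap2 Htrack1 Htrack2.
  destruct (Nat.le_exists_sub p1 q1 Hpq) as [m [Hm _]].
  destruct (Nat.le_exists_sub (q1 + p2) Q HqQ) as [t [Ht _]].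
  assert (Hsplit : sumR Q h = sumR p1 (fun j => h (0 + j)%nat) + sumR m (fun j => h (p1 + j)%nat)
                + sumR p2 (fun j => h (q1 + j)%nat) + sumR t (fun j => h (q1 + p2 + j)%nat)).
  { rewrite Ht, (Nat.add_comm t), !sumR_add, Hm, (Nat.add_comm m p1), sumR_add. reflexivity. }
  assert (HB : 0 <= B) by (pose proof (h_bound O); pose proof (Rabs_pos (h O)); lra).
  assert (Hm_small : INR m * B <= e * INR p1 * B)
    by (apply Rmult_le_compat_r; [exact HB|]; subst q1; rewrite plus_INR in Hgap1; lra).
  assert (Ht_small : INR t * B <= e * INR p2 * B)
    by (apply Rmult_le_compat_r; [exact HB|]; subst Q; rewrite !plus_INR in Hgap2; lra).
  pose proof (sumR_tracking_deviation g1 k1 g1_periodic h p1 0 B eta k1_pos g1_bound Htrack1) as H1.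
  pose proof (sumR_tracking_deviation g2 k2 g2_periodic h p2 q1 B eta k2_pos g2_bound Htrack2) as H2.
  pose proof (sumR_bound m _ B (fun j _ => h_bound (p1 + j)%nat)) as Hgm.
  pose proof (sumR_bound t _ B (fun j _ => h_bound (q1 + p2 + j)%nat)) as Hgt.
  rewrite Hsplit. apply Rabs_le_iff in H1, H2, Hgm, Hgt. apply Rabs_le_iff. nra.
Qed.

Lemma mean_concat_estimate p1 p2 q1 Q e eta lam r :
  (0 < p1)%nat -> 0 <= e -> 0 <= lam <= 1 ->
  INR p1 <= INR q1 <= (1 + e) * INR p1 -> INR p2 <= INR Q - INR q1 <= (1 + e) * INR p2 ->
  (forall j, (j < p1)%nat -> Rabs (h j - g1 j) <= eta) ->
  (forall j, (j < p2)%nat -> Rabs (h (q1 + j)%nat - g2 j) <= eta) ->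
  Rabs (INR p1 / (INR p1 + INR p2) - lam) <= r ->
  Rabs (mean Q h - (lam * mean k1 g1 + (1 - lam) * mean k2 g2))
    <= eta + 2 * B * e + 2 * B * r + 2 * B * (INR k1 + INR k2) / (INR p1 + INR p2).
Proof.
  intros Hp1 He Hlam Hq1 HQ Htrack1 Htrack2 Hratio.
  assert (Hpq : (p1 <= q1)%nat) by (apply INR_le; lra).
  assert (HqQ : (q1 + p2 <= Q)%nat) by (apply INR_le; rewrite plus_INR; lra).
  pose proof (sumR_concat_deviation p1 p2 q1 Q e eta Hpq HqQ ltac:(lra) ltac:(lra) Htrack1 Htrack2)
    as Hsum.
  set (A1 := mean k1 g1) in *. set (A2 := mean k2 g2) in *.
  set (P := INR p1 + INR p2) in *. set (L := lam * A1 + (1 - lam) * A2).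
  assert (HP : 0 < P) by (pose proof (lt_0_INR p1 Hp1); pose proof (pos_INR p2); unfold P; lra).
  assert (HQP : P <= INR Q <= (1 + e) * P) by (unfold P; lra).
  assert (HA1 : Rabs A1 <= B) by (apply mean_bound; auto).
  assert (HA2 : Rabs A2 <= B) by (apply mean_bound; auto).
  assert (HL : Rabs L <= B).
  { unfold L. apply Rabs_le_iff in HA1, HA2. apply Rabs_le_iff. nra. }
  assert (Hmix : Rabs (INR p1 * A1 + INR p2 * A2 - P * L) <= P * (2 * B * r)).
  { replace (INR p1 * A1 + INR p2 * A2 - P * L) with (P * ((INR p1 / P - lam) * (A1 - A2)))
      by (unfold L, P; field; fold P; lra).
    rewrite Rabs_mult, (Rabs_right P) by lra. apply Rmult_le_compat_l; [lra|].
    rewrite Rabs_mult. replace (2 * B * r) with (r * (2 * B)) by ring.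
    apply Rmult_le_compat; try apply Rabs_pos; [exact Hratio|].
    apply Rabs_le_iff in HA1, HA2. apply Rabs_le_iff. lra. }
  assert (Hlen : Rabs ((P - INR Q) * L) <= e * P * B).
  { rewrite Rabs_mult. apply Rmult_le_compat; try apply Rabs_pos; [|exact HL].
    apply Rabs_le_iff. lra. }
  assert (Htotal : Rabs (sumR Q h - INR Q * L)
            <= P * (eta + 2 * B * e + 2 * B * r) + 2 * B * (INR k1 + INR k2)).
  { apply Rabs_le_iff in Hsum, Hmix, Hlen. apply Rabs_le_iff. nra. }
  replace (mean Q h - L) with ((sumR Q h - INR Q * L) / INR Q) by (unfold mean; field; lra).
  unfold Rdiv. rewrite Rabs_mult, Rabs_inv, (Rabs_right (INR Q)) by lra.
  apply Rle_trans with ((P * (eta + 2 * B * e + 2 * B * r) + 2 * B * (INR k1 + INR k2)) * / P).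
  - apply Rmult_le_compat; try lra; [apply Rabs_pos| left; apply Rinv_0_lt_compat; lra|].
    apply Rinv_le_contravar; lra.
  - apply Req_le. field. lra.
Qed.

End Concatenation.

Section Periods.
Context {X : Type} (T : X -> X).

Lemma iter_period_add k x j : Nat.iter k T x = x -> Nat.iter (k + j) T x = Nat.iter j T x.
Proof. intros H. rewrite Nat.add_comm, Nat.iter_add, H. reflexivity. Qed.

Lemma iter_period_mul k x a : Nat.iter k T x = x -> Nat.iter (a * k) T x = x.
Proof.
  intros H. induction a as [|a IH]; [reflexivity|].
  simpl Nat.mul. rewrite Nat.iter_add, IH. exact H.
Qed.

Lemma iter_period_mod k x j : (0 < k)%nat -> Nat.iter k T x = x ->
  Nat.iter j T x = Nat.iter (j mod k) T x.
Proof.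
  intros Hk H.
  transitivity (Nat.iter (j mod k + j / k * k) T x);
    [f_equal; pose proof (Nat.div_mod_eq j k); lia|].
  rewrite Nat.iter_add, iter_period_mul by exact H. reflexivity.
Qed.

Lemma minimal_period_exists x : periodic T x -> exists k, minimal_period T x k.
Proof.
  intros [n [Hn Hx]].
  induction n as [n IH] using (well_founded_induction Wf_nat.lt_wf).
  destruct (classic (exists j, (0 < j)%nat /\ (j < n)%nat /\ Nat.iter j T x = x))
    as [[j [Hj0 [Hjn Hj]]]|Hnone].
  - exact (IH j Hjn Hj0 Hj).
  - exists n. repeat split; auto. intros j Hj0 Hjn Hj. apply Hnone. eauto.
Qed.

Lemma minimal_period_divides x k Q : minimal_period T x k -> Nat.iter Q T x = x ->
  (Q mod k = 0)%nat.
Proof.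
  intros [Hk [Hkx Hmin]] HQ.
  destruct (Nat.eq_dec (Q mod k) 0) as [|Hne]; [assumption|exfalso].
  apply (Hmin (Q mod k)); [lia|apply Nat.mod_upper_bound; lia|].
  rewrite <- iter_period_mod; assumption.
Qed.

Definition orbit_mean (f : X -> R) (x : X) (k : nat) : R := mean k (fun j => f (Nat.iter j T x)).

Lemma orbit_mean_period f x k Q : minimal_period T x k -> (0 < Q)%nat -> Nat.iter Q T x = x ->
  orbit_mean f x Q = orbit_mean f x k.
Proof.
  intros Hmin HQ HQx.
  pose proof (minimal_period_divides x k Q Hmin HQx) as Hdiv.
  destruct Hmin as [Hk [Hkx _]].
  assert (HQ' : Q = (Q / k * k)%nat) by (pose proof (Nat.div_mod_eq Q k); lia).
  assert (0 < INR (Q / k)) by (apply lt_0_INR; destruct (Q / k)%nat; lia).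
  assert (0 < INR k) by (apply lt_0_INR; exact Hk).
  unfold orbit_mean, mean. rewrite HQ', sumR_periodic, mult_INR.
  - field. lra.
  - intros j. rewrite iter_period_add by exact Hkx. reflexivity.
Qed.

Definition orbit_points (x : X) (k : nat) : list X := map (fun j => Nat.iter j T x) (seq 0 k).

Lemma in_orbit_points x k j : (0 < k)%nat -> Nat.iter k T x = x ->
  In (Nat.iter j T x) (orbit_points x k).
Proof.
  intros Hk Hx. rewrite (iter_period_mod k x j Hk Hx).
  apply (in_map (fun i => Nat.iter i T x)), in_seq. pose proof (Nat.mod_upper_bound j k). lia.
Qed.

End Periods.

Lemma grid_indicator_sum_above n (t : nat -> R) v : (forall i, (i < n)%nat -> t i < t (S i)) ->
  t n < v -> sumR n (fun i => t (S i) * indic (t i < v <= t (S i))) = 0.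
Proof.
  induction n as [|n IH]; intros Ht Hv; simpl; [reflexivity|].
  pose proof (Ht n (Nat.lt_succ_diag_r n)) as Hstep.
  rewrite IH; [|intros; apply Ht; lia|lra].
  unfold indic. destruct (excluded_middle_informative _); lra.
Qed.

Lemma grid_indicator_sum n (t : nat -> R) v d :
  (forall i, (i < n)%nat -> t i < t (S i) < t i + d) -> t O < v -> v <= t n ->
  v <= sumR n (fun i => t (S i) * indic (t i < v <= t (S i))) < v + d.
Proof.
  induction n as [|n IH]; intros Ht H0 Hn; simpl sumR; [simpl in Hn; lra|].
  pose proof (Ht n (Nat.lt_succ_diag_r n)) as Hstep.
  destruct (Rle_lt_dec v (t n)) as [Hle|Hlt].
  - assert (Hout : indic (t n < v <= t (S n)) = 0)
      by (unfold indic; destruct (excluded_middle_informative _); lra).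
    rewrite Hout, Rmult_0_r, Rplus_0_r. apply IH; [intros; apply Ht; lia|lra|lra].
  - rewrite grid_indicator_sum_above; [|intros; apply Ht; lia|lra].
    assert (Hin : indic (t n < v <= t (S n)) = 1)
      by (unfold indic; destruct (excluded_middle_informative _); [reflexivity|lra]).
    rewrite Hin. lra.
Qed.

Section Integrals.
Context {X : Type}.

Lemma grid_exists (f : X -> R) B delta : (forall x, Rabs (f x) <= B) -> 0 < delta ->
  exists n t, (forall x, t O < f x) /\ (forall x, f x <= t n) /\
    (forall i, (i < n)%nat -> t i < t (S i) < t i + delta).
Proof.
  intros HB Hd.
  destruct (INR_archimed (delta / 2) (2 * B + 2)) as [n Hn]; [lra|].
  exists n, (fun i => - B - 1 + INR i * (delta / 2)).
  split; [|split]; [intros x; specialize (HB x); apply Rabs_le_iff in HB; simpl; lra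
                   |intros x; specialize (HB x); apply Rabs_le_iff in HB; lra
                   |intros i _; rewrite S_INR; lra].
Qed.

Lemma integral_unique (m : (X -> Prop) -> R) f B I J : (forall x, Rabs (f x) <= B) ->
  integral_is m f I -> integral_is m f J -> I = J.
Proof.
  intros HB HI HJ. apply NNPP. intros Hne.
  set (eps := Rabs (I - J) / 2).
  assert (He : 0 < eps) by (unfold eps; pose proof (Rabs_pos_lt (I - J) ltac:(lra)); lra).
  destruct (HI eps He) as [d1 [Hd1 H1]], (HJ eps He) as [d2 [Hd2 H2]].
  destruct (grid_exists f B (Rmin d1 d2) HB (Rmin_pos _ _ Hd1 Hd2)) as [n [t [T0 [Tn Ti]]]].
  pose proof (Rmin_l d1 d2). pose proof (Rmin_r d1 d2).
  specialize (H1 n t T0 Tn ltac:(intros i Hi; specialize (Ti i Hi); lra)).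
  specialize (H2 n t T0 Tn ltac:(intros i Hi; specialize (Ti i Hi); lra)).
  set (S := sumR n _) in H1, H2.
  assert (Htri : Rabs (I - J) <= Rabs (S - I) + Rabs (S - J)).
  { replace (I - J) with (- (S - I) + (S - J)) by ring.
    eapply Rle_trans; [apply Rabs_triang|]. rewrite Rabs_Ropp. lra. }
  unfold eps in *. lra.
Qed.

Lemma integral_ext (m m' : (X -> Prop) -> R) f I : (forall A, m A = m' A) ->
  integral_is m f I -> integral_is m' f I.
Proof.
  intros Hm HI eps He. destruct (HI eps He) as [d [Hd H]].
  exists d. split; [exact Hd|]. intros n t T0 Tn Ti.
  rewrite (sumR_ext n _ (fun i => t (S i) * m (fun x => t i < f x <= t (S i))))
    by (intros; rewrite Hm; reflexivity).
  apply H; assumption.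
Qed.

Lemma integral_lincomb (m1 m2 : (X -> Prop) -> R) f a b s u : 0 <= s -> 0 <= u ->
  integral_is m1 f a -> integral_is m2 f b ->
  integral_is (fun A => s * m1 A + u * m2 A) f (s * a + u * b).
Proof.
  intros Hs Hu Ha Hb eps He.
  set (eps' := eps / (s + u + 1)).
  assert (He' : 0 < eps') by (apply Rdiv_lt_0_compat; lra).
  destruct (Ha eps' He') as [d1 [Hd1 H1]], (Hb eps' He') as [d2 [Hd2 H2]].
  exists (Rmin d1 d2). split; [apply Rmin_pos; assumption|]. intros n t T0 Tn Ti.
  pose proof (Rmin_l d1 d2). pose proof (Rmin_r d1 d2).
  specialize (H1 n t T0 Tn ltac:(intros i Hi; specialize (Ti i Hi); lra)).
  specialize (H2 n t T0 Tn ltac:(intros i Hi; specialize (Ti i Hi); lra)).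
  rewrite (sumR_ext n _ (fun i => s * (t (S i) * m1 (fun x => t i < f x <= t (S i)))
                             + u * (t (S i) * m2 (fun x => t i < f x <= t (S i)))))
    by (intros; ring).
  rewrite sumR_plus, !sumR_scal.
  set (S1 := sumR n _) in H1 |- *. set (S2 := sumR n _) in H2 |- *.
  replace (s * S1 + u * S2 - (s * a + u * b)) with (s * (S1 - a) + u * (S2 - b)) by ring.
  eapply Rle_lt_trans; [apply Rabs_triang|].
  rewrite !Rabs_mult, (Rabs_right s), (Rabs_right u) by lra.
  apply Rle_lt_trans with ((s + u) * eps').
  - pose proof (Rmult_le_compat_l s _ _ Hs (Rlt_le _ _ H1)).
    pose proof (Rmult_le_compat_l u _ _ Hu (Rlt_le _ _ H2)). lra.
  - unfold eps'. apply (Rmult_lt_reg_r (s + u + 1)); [lra|].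
    field_simplify; lra.
Qed.

Lemma integral_orbit_measure (T : X -> X) f x k : (0 < k)%nat ->
  integral_is (orbit_measure T x k) f (orbit_mean T f x k).
Proof.
  intros Hk eps He. unfold orbit_mean. exists (eps / 2). split; [lra|]. intros n t T0 Tn Ti.
  set (riemann := fun v => sumR n (fun i => t (S i) * indic (t i < v <= t (S i)))).
  assert (Hswap : sumR n (fun i => t (S i) * orbit_measure T x k (fun y => t i < f y <= t (S i)))
                  = mean k (fun j => riemann (f (Nat.iter j T x)))).
  { unfold orbit_measure, mean, riemann.
    rewrite (sumR_ext n _ (fun i => sumR k (fun j => / INR k *
               (t (S i) * indic (t i < f (Nat.iter j T x) <= t (S i))))))
      by (intros; rewrite !sumR_scal; ring).
    rewrite sumR_swap, <- sumR_scal. apply sumR_ext. intros j _. apply sumR_scal. }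
  rewrite Hswap, mean_minus.
  apply Rle_lt_trans with (eps / 2); [|lra].
  apply mean_bound; [exact Hk|]. intros j _.
  pose proof (grid_indicator_sum n t (f (Nat.iter j T x)) (eps / 2) Ti (T0 _) (Tn _)).
  apply Rabs_le_iff. unfold riemann. lra.
Qed.

End Integrals.

Lemma fraction_gap (a s a' s' : nat) : (0 < s)%nat -> (0 < s')%nat ->
  INR a / INR s <> INR a' / INR s' ->
  / (INR s * INR s') <= Rabs (INR a / INR s - INR a' / INR s').
Proof.
  intros Hs Hs' Hne.
  pose proof (lt_0_INR s Hs). pose proof (lt_0_INR s' Hs').
  assert (Hcross : (a * s' <> a' * s)%nat).
  { intros E. apply Hne. apply (f_equal INR) in E. rewrite !mult_INR in E.
    replace (INR a / INR s) with (INR a * INR s' / (INR s * INR s')) by (field; lra).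
    rewrite E. field. lra. }
  assert (Hnum : 1 <= Rabs (INR (a * s') - INR (a' * s))).
  { destruct (Nat.lt_total (a * s') (a' * s)) as [Hlt|[Heq|Hlt]]; [|contradiction|];
      apply le_INR in Hlt; rewrite S_INR in Hlt; [rewrite Rabs_minus_sym|];
      rewrite Rabs_right; lra. }
  replace (INR a / INR s - INR a' / INR s')
    with ((INR (a * s') - INR (a' * s)) * / (INR s * INR s')) by (rewrite !mult_INR; field; lra).
  rewrite Rabs_mult, Rabs_inv, (Rabs_right (INR s * INR s')) by nra.
  rewrite <- (Rmult_1_l (/ (INR s * INR s'))) at 1.
  apply Rmult_le_compat_r; [left; apply Rinv_0_lt_compat; nra|exact Hnum].
Qed.

(* By [fraction_gap], unequal fractions with denominators at most [M] are at least [1 / M^2] apart. *)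
Lemma fractions_not_both_close (M a s a' s' : nat) x e :
  (0 < s <= M)%nat -> (0 < s' <= M)%nat -> 0 <= e <= / (8 * INR M * INR M) ->
  Rabs (INR a / INR s - x) <= e -> Rabs (INR a' / INR s' - (x + / (2 * INR M * INR M))) <= e ->
  False.
Proof.
  intros Hs Hs' He H1 H2.
  assert (HM : 0 < INR M) by (apply lt_0_INR; lia).
  assert (Hss : 0 < INR s * INR s' <= INR M * INR M).
  { pose proof (lt_0_INR s ltac:(lia)). pose proof (lt_0_INR s' ltac:(lia)).
    pose proof (le_INR s M ltac:(lia)). pose proof (le_INR s' M ltac:(lia)). split; nra. }
  set (d := / (2 * INR M * INR M)) in *.
  assert (Hd : 0 < d) by (unfold d; apply Rinv_0_lt_compat; nra).
  assert (He8 : e <= d / 4).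
  { unfold d. replace (/ (2 * INR M * INR M) / 4) with (/ (8 * INR M * INR M)) by (field; lra).
    lra. }
  apply Rabs_le_iff in H1, H2.
  assert (Hgap := fraction_gap a' s' a s ltac:(lia) ltac:(lia) ltac:(lra)).
  rewrite Rabs_right in Hgap by lra.
  assert (/ (INR M * INR M) <= / (INR s' * INR s)) by (apply Rinv_le_contravar; nra).
  assert (/ (INR M * INR M) = 2 * d) by (unfold d; field; lra).
  lra.
Qed.

Lemma common_delta {A : Type} (l : list A) (P : A -> R -> Prop) :
  (forall a d d', 0 < d' <= d -> P a d -> P a d') ->
  (forall a, In a l -> exists d, 0 < d /\ P a d) ->
  exists d, 0 < d /\ forall a, In a l -> P a d.
Proof.
  intros Hmono. induction l as [|a l IH]; intros H.
  - exists 1. split; [lra|]. intros _ [].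
  - destruct IH as [d1 [Hd1 H1]]; [intros; apply H; right; assumption|].
    destruct (H a (or_introl eq_refl)) as [d2 [Hd2 H2]].
    exists (Rmin d1 d2). pose proof (Rmin_l d1 d2). pose proof (Rmin_r d1 d2).
    pose proof (Rmin_pos d1 d2 Hd1 Hd2).
    split; [assumption|]. intros b [<-|Hb].
    + apply Hmono with d2; [lra|exact H2].
    + apply Hmono with d1; [lra|exact (H1 b Hb)].
Qed.

Lemma common_bound {X : Type} (fs : list (X -> R)) :
  (forall f, In f fs -> exists B, forall x, Rabs (f x) <= B) ->
  exists B, 0 <= B /\ forall f, In f fs -> forall x, Rabs (f x) <= B.
Proof.
  induction fs as [|g fs IH]; intros H.
  - exists 0. split; [lra|]. intros _ [].
  - destruct IH as [B1 [HB1 H1]]; [intros; apply H; right; assumption|].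
    destruct (H g (or_introl eq_refl)) as [B2 H2].
    exists (Rmax B1 B2). pose proof (Rmax_l B1 B2). pose proof (Rmax_r B1 B2).
    split; [lra|]. intros f [<-|Hf] x.
    + specialize (H2 x). lra.
    + specialize (H1 f Hf x). lra.
Qed.

Section Modulus.
Context {X : Type} (rho : X -> X -> R).
Hypothesis rho_sym : forall x y, rho x y = rho y x.

Lemma modulus_at_points (ps : list X) (fs : list (X -> R)) eta : 0 < eta ->
  (forall f, In f fs -> bounded_continuous rho f) ->
  exists d, 0 < d /\ forall f p u, In f fs -> In p ps -> rho u p < d -> Rabs (f u - f p) < eta.
Proof.
  intros Heta Hfs.
  assert (Hmono : forall (p : X) (f : X -> R) d d', 0 < d' <= d ->
            (forall u, rho u p < d -> Rabs (f u - f p) < eta) ->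
            forall u, rho u p < d' -> Rabs (f u - f p) < eta)
    by (intros p f d d' Hd H u Hu; apply H; lra).
  destruct (common_delta fs (fun f d => forall p u, In p ps -> rho u p < d -> Rabs (f u - f p) < eta))
    as [d [Hd H]].
  - intros f d d' Hd H p u Hp Hu. apply (Hmono p f d d' Hd); auto.
  - intros f Hf. destruct (Hfs f Hf) as [_ Hcont].
    destruct (common_delta ps (fun p d => forall u, rho u p < d -> Rabs (f u - f p) < eta))
      as [d [Hd H]].
    + intros p. apply Hmono.
    + intros p _. destruct (Hcont p eta Heta) as [d [Hd H]].
      exists d. split; [exact Hd|]. intros u Hu.
      rewrite Rabs_minus_sym. apply H. rewrite rho_sym. exact Hu.
    + exists d. split; [exact Hd|]. intros p u Hp. apply H, Hp.
  - exists d. split; [exact Hd|]. intros f p u Hf Hp. apply H; assumption.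
Qed.

End Modulus.

Lemma linking_error_bound B eta e r (k1 k2 M p1 p2 : nat) :
  0 <= B -> 0 < e -> 8 * (B + 1) * (INR k1 + INR k2 + 1) < INR M * eta ->
  e * (16 * (B + 1)) <= eta -> r <= / (2 * INR M * INR M) -> (M <= p1 + p2)%nat ->
  eta / 4 + 2 * B * e + 2 * B * (e + r) + 2 * B * (INR k1 + INR k2) / (INR p1 + INR p2) < eta.
Proof.
  intros HB He HM HeB Hr Hlong.
  pose proof (pos_INR k1). pose proof (pos_INR k2).
  assert (Heta : 0 < eta) by nra.
  assert (HMr : 1 <= INR M) by (destruct M; [simpl in HM; nra|apply (le_INR 1); lia]).
  assert (HP : INR M <= INR p1 + INR p2) by (rewrite <- plus_INR; apply le_INR, Hlong).
  assert (Hfollow : 2 * B * e + 2 * B * e <= eta / 4) by nra.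
  assert (Hratio : 2 * B * r <= eta / 8).
  { apply Rle_trans with (2 * B * / (2 * INR M * INR M)); [apply Rmult_le_compat_l; lra|].
    apply (Rmult_le_reg_r (2 * INR M * INR M)); [nra|].
    rewrite Rmult_assoc, Rinv_l by nra.
    assert (eta * INR M <= eta * INR M * INR M)
      by (rewrite <- (Rmult_1_r (eta * INR M)) at 1; apply Rmult_le_compat_l; nra).
    nra. }
  assert (Hperiods : 2 * B * (INR k1 + INR k2) / (INR p1 + INR p2) <= eta / 4).
  { unfold Rdiv. apply (Rmult_le_reg_r (INR p1 + INR p2)); [lra|].
    rewrite Rmult_assoc, Rinv_l, Rmult_1_r by lra. nra. }
  lra.
Qed.

Section Linking.
Context {X : Type} (rho : X -> X -> R) (T : X -> X) (K : X -> Prop).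
Hypothesis rho_sym : forall x y, rho x y = rho y x.
Hypothesis K_linkable : linkable rho T K.

Definition linking_data (y1 y2 : X) (eps lam : R) (p1 p2 q1 q2 : nat) (z : X) : Prop :=
  (0 < p1)%nat /\ (0 < p2)%nat /\ (0 < q1)%nat /\ (0 < q2)%nat /\
  K z /\ Nat.iter q2 T z = z /\
  lam - eps <= INR p1 / (INR p1 + INR p2) <= lam + eps /\
  INR p1 <= INR q1 <= (1 + eps) * INR p1 /\
  bowen_ball rho T y1 p1 eps z /\
  INR p2 <= INR q2 - INR q1 <= (1 + eps) * INR p2 /\
  bowen_ball rho T y2 p2 eps (Nat.iter q1 T z).

Lemma link_long_blocks y1 y2 lam M e : K y1 -> K y2 -> 0 <= lam <= 1 -> (0 < M)%nat ->
  0 < e <= / (8 * INR M * INR M) ->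
  exists lam' p1 p2 q1 q2 z, Rabs (lam' - lam) <= / (2 * INR M * INR M) /\
    (M <= p1 + p2)%nat /\ linking_data y1 y2 e lam' p1 p2 q1 q2 z.
Proof.
  intros Hy1 Hy2 Hlam HM He.
  assert (HMr : 1 <= INR M) by (apply (le_INR 1); lia).
  set (d := / (2 * INR M * INR M)).
  assert (Hd : 0 < d <= 1 / 2).
  { unfold d. split; [apply Rinv_0_lt_compat; nra|].
    unfold Rdiv. rewrite Rmult_1_l. apply Rinv_le_contravar; nra. }
  apply NNPP. intros Hnone.
  assert (Hshort : forall lam', 0 <= lam' <= 1 -> Rabs (lam' - lam) <= d ->
            exists a s, (0 < s <= M)%nat /\ Rabs (INR a / INR s - lam') <= e).
  { intros lam' Hlam' Hclose.
    destruct (proj2 K_linkable y1 y2 e lam' Hy1 Hy2 (proj1 He) Hlam')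
      as [p1 [p2 [q1 [q2 [z Hz]]]]].
    destruct (Compare_dec.le_lt_dec M (p1 + p2)) as [Hlong|Hshort].
    - exfalso. apply Hnone. exists lam', p1, p2, q1, q2, z. auto.
    - exists p1, (p1 + p2)%nat. destruct Hz as (Hp1 & _ & _ & _ & _ & _ & Hratio & _).
      split; [lia|]. rewrite plus_INR. apply Rabs_le_iff. lra. }
  set (lamA := if Rle_dec lam (1 / 2) then lam else lam - d).
  assert (HA : 0 <= lamA <= 1 /\ Rabs (lamA - lam) <= d /\
               0 <= lamA + d <= 1 /\ Rabs (lamA + d - lam) <= d)
    by (unfold lamA; destruct (Rle_dec lam (1 / 2)); rewrite !Rabs_le_iff; lra).
  destruct HA as (HA1 & HA2 & HA3 & HA4).
  destruct (Hshort lamA HA1 HA2) as [a [s [Hs H1]]].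
  destruct (Hshort (lamA + d) HA3 HA4) as [a' [s' [Hs' H2]]].
  exact (fractions_not_both_close M a s a' s' lamA e Hs Hs' ltac:(lra) H1 H2).
Qed.

Lemma linked_orbit_mean_estimate f B z1 k1 z2 k2 lam lam' e eta p1 p2 q1 q2 w kw :
  minimal_period T z1 k1 -> minimal_period T z2 k2 -> (forall x, Rabs (f x) <= B) ->
  0 <= lam <= 1 -> 0 <= e ->
  linking_data z1 z2 e lam' p1 p2 q1 q2 w -> minimal_period T w kw ->
  (forall j u, rho u (Nat.iter j T z1) < e -> Rabs (f u - f (Nat.iter j T z1)) <= eta) ->
  (forall j u, rho u (Nat.iter j T z2) < e -> Rabs (f u - f (Nat.iter j T z2)) <= eta) ->
  Rabs (orbit_mean T f w kw - (lam * orbit_mean T f z1 k1 + (1 - lam) * orbit_mean T f z2 k2))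
    <= eta + 2 * B * e + 2 * B * (e + Rabs (lam' - lam))
       + 2 * B * (INR k1 + INR k2) / (INR p1 + INR p2).
Proof.
  intros [Hk1 [Hz1 _]] [Hk2 [Hz2 _]] HB Hlam He
    (Hp1 & _ & _ & Hq2 & _ & Hw & Hratio & Hq1 & Hball1 & HQ & Hball2) Hkw Hc1 Hc2.
  rewrite <- (orbit_mean_period T f w kw q2 Hkw Hq2 Hw). unfold orbit_mean.
  apply mean_concat_estimate with (q1 := q1); try (intros; apply HB); try assumption.
  - intros j. rewrite iter_period_add by exact Hz1. reflexivity.
  - intros j. rewrite iter_period_add by exact Hz2. reflexivity.
  - intros j Hj. apply Hc1, Hball1, Hj.
  - intros j Hj. specialize (Hball2 j Hj). rewrite <- Nat.iter_add, Nat.add_comm in Hball2.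
    apply Hc2, Hball2.
  - pose proof (Rle_abs (lam' - lam)). pose proof (Rle_abs (- (lam' - lam))).
    rewrite Rabs_Ropp in *. apply Rabs_le_iff. lra.
Qed.

Lemma link_two_orbits z1 k1 z2 k2 lam fs eta :
  K z1 -> minimal_period T z1 k1 -> K z2 -> minimal_period T z2 k2 -> 0 <= lam <= 1 ->
  (forall f, In f fs -> bounded_continuous rho f) -> 0 < eta ->
  exists w k, K w /\ minimal_period T w k /\ forall f, In f fs ->
    Rabs (orbit_mean T f w k - (lam * orbit_mean T f z1 k1 + (1 - lam) * orbit_mean T f z2 k2))
      < eta.
Proof.
  intros Kz1 Hz1 Kz2 Hz2 Hlam Hfs Heta.
  pose proof Hz1 as (Hk1 & Hz1p & _). pose proof Hz2 as (Hk2 & Hz2p & _).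
  destruct (common_bound fs) as [B [HB0 HB]]; [intros f Hf; exact (proj1 (Hfs f Hf))|].
  destruct (modulus_at_points rho rho_sym (orbit_points T z1 k1 ++ orbit_points T z2 k2) fs
              (eta / 4) ltac:(lra) Hfs) as [dl [Hdl Hmod]].
  destruct (INR_archimed eta (8 * (B + 1) * (INR k1 + INR k2 + 1)) ltac:(lra)) as [M HM].
  pose proof (pos_INR k1). pose proof (pos_INR k2).
  assert (HM0 : (0 < M)%nat) by (destruct M; [simpl in HM; nra|lia]).
  assert (HMr : 1 <= INR M) by (apply (le_INR 1); lia).
  set (eB := eta / (16 * (B + 1))). set (eM := / (8 * INR M * INR M)).
  assert (HeB_pos : 0 < eB) by (apply Rdiv_lt_0_compat; lra).
  assert (HeM_pos : 0 < eM) by (apply Rinv_0_lt_compat; nra).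
  set (e := Rmin dl (Rmin eM eB)).
  assert (He0 : 0 < e) by (repeat apply Rmin_pos; assumption).
  assert (Hedl : e <= dl) by apply Rmin_l.
  assert (HeM : e <= eM) by (eapply Rle_trans; [apply Rmin_r|apply Rmin_l]).
  assert (HeB : e * (16 * (B + 1)) <= eta).
  { assert (e <= eB) by (eapply Rle_trans; [apply Rmin_r|apply Rmin_r]).
    replace eta with (eB * (16 * (B + 1))) by (unfold eB; field; lra).
    apply Rmult_le_compat_r; lra. }
  destruct (link_long_blocks z1 z2 lam M e Kz1 Kz2 Hlam HM0 (conj He0 HeM))
    as (lam' & p1 & p2 & q1 & q2 & w & Hlam' & Hlong & Hdata).
  pose proof Hdata as (_ & _ & _ & _ & Kw & _).
  destruct (minimal_period_exists T w (proj1 K_linkable w Kw)) as [kw Hkw].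
  exists w, kw. split; [exact Kw|split; [exact Hkw|]]. intros f Hf.
  eapply Rle_lt_trans.
  { apply (linked_orbit_mean_estimate f B z1 k1 z2 k2 lam lam' e (eta / 4) p1 p2 q1 q2 w kw);
      try assumption; try lra; [apply HB, Hf| |];
      intros j u Hu; left; apply (Hmod f); try assumption; try lra;
      apply in_or_app; [left|right]; apply in_orbit_points; assumption. }
  apply (linking_error_bound B eta e (Rabs (lam' - lam)) k1 k2 M p1 p2); assumption.
Qed.

Lemma convex_combination_orbit_approx n lam (ms : nat -> (X -> Prop) -> R) fs eta :
  (forall i, (i < n)%nat -> 0 <= lam i /\ Mco T K (ms i)) -> sumR n lam = 1 ->
  (forall f, In f fs -> bounded_continuous rho f) -> 0 < eta ->
  exists w k, K w /\ minimal_period T w k /\ forall f, In f fs ->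
    exists I, integral_is (fun A => sumR n (fun i => lam i * ms i A)) f I /\
              Rabs (orbit_mean T f w k - I) < eta.
Proof.
  revert lam ms eta. induction n as [|n IH]; intros lam ms eta Hcoef Hsum Hfs Heta;
    [simpl in Hsum; lra|].
  destruct (Hcoef n (Nat.lt_succ_diag_r n)) as [Hlamn [y [k2 [Ky [Hy Hmsn]]]]].
  assert (Hcoef' : forall i, (i < n)%nat -> 0 <= lam i /\ Mco T K (ms i))
    by (intros; apply Hcoef; lia).
  simpl in Hsum. set (s := sumR n lam) in Hsum.
  assert (Hs0 : 0 <= s) by (apply sumR_nonneg; intros; apply Hcoef'; assumption).
  destruct (Req_dec s 0) as [Hs|Hs].
  - assert (Hzero : forall A, sumR n (fun i => lam i * ms i A) = 0).
    { intros A. rewrite <- (Rmult_0_r (INR n)), <- sumR_const. apply sumR_ext. intros i Hi.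
      rewrite (sumR_nonneg_eq0 n lam (fun i Hi => proj1 (Hcoef' i Hi)) Hs i Hi). ring. }
    exists y, k2. split; [exact Ky|split; [exact Hy|]]. intros f Hf.
    exists (orbit_mean T f y k2). split.
    + apply integral_ext with (orbit_measure T y k2); [|exact (integral_orbit_measure T f y k2 (proj1 Hy))].
      intros A. simpl. rewrite Hzero, Hmsn. replace (lam n) with 1 by lra. ring.
    + rewrite Rminus_diag, Rabs_R0. exact Heta.
  - assert (Hspos : 0 < s) by lra.
    destruct (IH (fun i => lam i / s) ms (eta / 2)) as [z1 [k1 [Kz1 [Hz1 Happrox]]]].
    + intros i Hi. destruct (Hcoef' i Hi) as [Hlami Hmi].
      split; [unfold Rdiv; apply Rmult_le_pos; [lra|left; apply Rinv_0_lt_compat; lra]|exact Hmi].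
    + unfold Rdiv. rewrite (sumR_ext n _ (fun i => / s * lam i)), sumR_scal by (intros; ring).
      fold s. field. lra.
    + exact Hfs.
    + lra.
    + destruct (link_two_orbits z1 k1 y k2 s fs (eta / 2)
                  Kz1 Hz1 Ky Hy ltac:(lra) Hfs ltac:(lra)) as [w [kw [Kw [Hkw Hlink]]]].
      exists w, kw. split; [exact Kw|split; [exact Hkw|]]. intros f Hf.
      destruct (Happrox f Hf) as [J [HJ HJclose]].
      exists (s * J + (1 - s) * orbit_mean T f y k2). split.
      * apply integral_ext with (fun A => s * sumR n (fun i => lam i / s * ms i A)
                                          + (1 - s) * orbit_measure T y k2 A).
        -- intros A. simpl. rewrite <- sumR_scal, Hmsn. replace (1 - s) with (lam n) by lra.
           f_equal. apply sumR_ext. intros. field. lra.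
        -- apply integral_lincomb; [lra|lra|exact HJ|exact (integral_orbit_measure T f y k2 (proj1 Hy))].
      * specialize (Hlink f Hf).
        replace (orbit_mean T f w kw - (s * J + (1 - s) * orbit_mean T f y k2))
          with ((orbit_mean T f w kw - (s * orbit_mean T f z1 k1 + (1 - s) * orbit_mean T f y k2))
                + s * (orbit_mean T f z1 k1 - J)) by ring.
        eapply Rle_lt_trans; [apply Rabs_triang|].
        rewrite Rabs_mult, (Rabs_right s) by lra.
        assert (s * Rabs (orbit_mean T f z1 k1 - J) <= Rabs (orbit_mean T f z1 k1 - J)).
        { rewrite <- (Rmult_1_l (Rabs _)) at 2. apply Rmult_le_compat_r; [apply Rabs_pos|lra]. }
        lra.
Qed.

End Linking.

Section Weak_closure.
Context {X : Type} (rho : X -> X -> R).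

Lemma weak_closure_mono (S1 S2 : ((X -> Prop) -> R) -> Prop) mu :
  (forall m, S1 m -> S2 m) -> weak_closure rho S1 mu -> weak_closure rho S2 mu.
Proof.
  intros Hsub [Hprob Hclose]. split; [exact Hprob|]. intros fs eps Hfs Heps.
  destruct (Hclose fs eps Hfs Heps) as [nu [Hnu Hint]]. exists nu. auto.
Qed.

(* [integral_is] is a relation (an integral need not exist), hence the quantification over [b]. *)
Definition weak_approximable (S : ((X -> Prop) -> R) -> Prop) (nu : (X -> Prop) -> R) : Prop :=
  forall fs eps, Forall (bounded_continuous rho) fs -> 0 < eps ->
    exists nu', S nu' /\ Forall (fun f => forall b, integral_is nu f b ->
      exists b', integral_is nu' f b' /\ Rabs (b - b') < eps) fs.

Lemma weak_closure_approximable (S1 S2 : ((X -> Prop) -> R) -> Prop) mu :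
  (forall nu, S2 nu -> weak_approximable S1 nu) ->
  weak_closure rho S2 mu -> weak_closure rho S1 mu.
Proof.
  intros Happrox [Hprob Hclose]. split; [exact Hprob|]. intros fs eps Hfs Heps.
  destruct (Hclose fs (eps / 2) Hfs ltac:(lra)) as [nu [Hnu Hint]].
  destruct (Happrox nu Hnu fs (eps / 2) Hfs ltac:(lra)) as [nu' [Hnu' Hint']].
  exists nu'. split; [exact Hnu'|].
  rewrite Forall_forall in Hint, Hint' |- *. intros f Hf.
  destruct (Hint f Hf) as [a [b [Ha [Hb Hab]]]].
  destruct (Hint' f Hf b Hb) as [b' [Hb' Hbb']].
  exists a, b'. split; [exact Ha|split; [exact Hb'|]].
  replace (a - b') with ((a - b) + (b - b')) by ring.
  eapply Rle_lt_trans; [apply Rabs_triang|]. lra.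
Qed.

End Weak_closure.

Lemma Mco_convex_hull {X : Type} (T : X -> X) K (m : (X -> Prop) -> R) :
  Mco T K m -> convex_hull (Mco T K) m.
Proof.
  intros Hm. exists 1%nat, (fun _ => 1), (fun _ => m).
  split; [intros i _; split; [lra|exact Hm]|]. split; [simpl; lra|]. intros A. simpl. ring.
Qed.

Lemma convex_hull_Mco_approximable {X : Type} (rho : X -> X -> R) T K nu :
  (forall x y, rho x y = rho y x) -> linkable rho T K ->
  convex_hull (Mco T K) nu -> weak_approximable rho (Mco T K) nu.
Proof.
  intros rho_sym HK [n [lam [ms [Hcoef [Hsum Hnu]]]]] fs eps Hfs Heps.
  rewrite Forall_forall in Hfs.
  destruct (convex_combination_orbit_approx rho T K rho_sym HK n lam ms fs eps Hcoef Hsum Hfs Heps)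
    as [w [k [Kw [Hk Happrox]]]].
  exists (orbit_measure T w k). split; [exists w, k; auto|].
  apply Forall_forall. intros f Hf b Hb.
  destruct (Happrox f Hf) as [I [HI Hclose]].
  destruct (proj1 (Hfs f Hf)) as [B HB].
  assert (HbI : b = I).
  { apply (integral_unique nu f B b I HB); [exact Hb|].
    apply integral_ext with (fun A => sumR n (fun i => lam i * ms i A)); [|exact HI].
    intros A. symmetry. apply Hnu. }
  exists (orbit_mean T f w k). split; [exact (integral_orbit_measure T f w k (proj1 Hk))|].
  rewrite HbI, Rabs_minus_sym. exact Hclose.
Qed.

Theorem theorem5p13 (X : Type) (rho : X -> X -> R) (T : X -> X) (K : X -> Prop)
  (HX : dynamical_system rho T) (HK : linkable rho T K) :
  forall mu : (X -> Prop) -> R,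
    weak_closure rho (Mco T K) mu <->
    weak_closure rho (convex_hull (Mco T K)) mu.
Proof.
  intros mu. destruct HX as [(_ & _ & rho_sym & _) _]. split.
  - apply weak_closure_mono, Mco_convex_hull.
  - apply weak_closure_approximable. intros nu Hnu.
    exact (convex_hull_Mco_approximable rho T K nu rho_sym HK Hnu).
Qed.
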